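(* Let ${\cal X}$ be a real Hilbert space, $M\in\mathbb{N}_0$ and $\kappa_1,\kappa_2>0$. For all $j\in\{1,\dots,M\}$ let $(s_j,y_j)\in{\cal X}\times{\cal X}$ satisfy $$\frac{y_j^Ts_j}{\|s_j\|^2}\ge\frac1{\kappa_1}\qquad\text{and}\qquad\frac{y_j^Ts_j}{\|y_j\|^2}\ge\frac1{\kappa_2}.$$ Let $B^{(0)}\in\mathcal{L}_+({\cal X})$, set $B_0:=B^{(0)}$ and $$B_j:=B_{j-1}+\frac{y_jy_j^T}{y_j^Ts_j}-\frac{B_{j-1}s_js_j^TB_{j-1}}{s_j^TB_{j-1}s_j},\qquad j=1,\dots,M,$$ and $B:=B_M$. Then $B\in\mathcal{L}_+({\cal X})$, $$\|B\|\le\|B^{(0)}\|+M\kappa_2,$$ and $$\|B^{-1}\|\le5^M\max\{1,\|(B^{(0)})^{-1}\|\}\max\{1,\kappa_1^M,(\kappa_1\kappa_2)^M\}.$$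
   Context: ${\cal X}$ is a real Hilbert space with inner product written $x^Ty$ and induced norm $\|\cdot\|$; for $u,v\in{\cal X}$, $uv^T$ denotes the operator $w\mapsto u\,(v^Tw)$. $\mathcal{L}({\cal X})$ is the space of bounded linear operators on ${\cal X}$ and $\mathcal{L}_+({\cal X})$ the set of self-adjoint positive definite operators in $\mathcal{L}({\cal X})$. Operator norms are the induced norms. *)

From HB Require Import structures.
From mathcomp Require Import all_boot all_order all_algebra.
From mathcomp Require Import all_classical all_reals all_analysis.
Set Implicit Arguments. Unset Strict Implicit. Unset Printing Implicit Defensive.
Import Order.TTheory GRing.Theory Num.Theory.
Import numFieldNormedType.Exports.
Local Open Scope classical_set_scope.
Local Open Scope ring_scope.

Section HilbertDefs.
Variable R : realType.
Variable X : completeNormedModType R.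
Variable ip : X -> X -> R.   (* the inner product  x^T y = ip x y *)

(* ip is a real inner product inducing the norm of X; together with the
   completeness of X this makes X a real Hilbert space. *)
Definition is_inner_product : Prop :=
  (forall x y, ip x y = ip y x) /\
  (forall (a : R) (x y z : X), ip (a *: x + y) z = a * ip x z + ip y z) /\
  (forall x, ip x x = `|x| ^+ 2).

Definition bounded_linear (T : X -> X) : Prop :=
  (forall (a : R) (x y : X), T (a *: x + y) = a *: T x + T y) /\
  (exists c : R, forall x, `|T x| <= c * `|x|).

Definition opnorm (T : X -> X) : R :=
  sup [set `|T x| | x in [set x : X | `|x| <= 1]].

Definition self_adjoint (T : X -> X) : Prop :=
  forall x y, ip (T x) y = ip x (T y).

Definition Lplus (T : X -> X) : Prop :=
  bounded_linear T /\ self_adjoint T /\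
  exists c : R, 0 < c /\ forall x, c * `|x| ^+ 2 <= ip x (T x).

Definition is_inverse (T C : X -> X) : Prop :=
  (forall x, T (C x) = x) /\ (forall x, C (T x) = x).

(* the inverse operator T^{-1} (chosen classically; identity if none) *)
Definition opinv (T : X -> X) : X -> X :=
  match pselect (exists C, is_inverse T C) with
  | left h => proj1_sig (cid h)
  | right _ => id
  end.

Definition bfgs_update (B : X -> X) (s y : X) : X -> X :=
  fun w => B w + (ip y w / ip y s) *: y - (ip s (B w) / ip s (B s)) *: B s.

Fixpoint bfgs_seq (B0 : X -> X) (s y : nat -> X) (j : nat) : X -> X :=
  match j with
  | O => B0
  | S j' => bfgs_update (bfgs_seq B0 s y j') (s j'.+1) (y j'.+1)
  end.

End HilbertDefs.

(* Write Q_B(x) = <x, B x>.  One BFGS update with the pair (s, y) turns the form into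
     Q_B+(x) = Q_B(z) + <y, x>^2 / <y, s>,   z = x - (<s, B x> / <s, B s>) s,
   where Q_B(z) = Q_B(x) - <s, B x>^2 / <s, B s> <= Q_B(x).  With |y|^2 <= kappa2 <y, s>
   this gives Q_B+ <= Q_B + kappa2 |.|^2.  Conversely x = z + a s and
   a <y, s> = <y, x> - <y, z>, so |x| <= (1 + r) |z| + |<y, x>| |s| / <y, s> with
   r = |y| |s| / <y, s> <= sqrt (kappa1 kappa2); hence a bound |.|^2 <= K Q_B becomes
   |.|^2 <= 5 max(1, kappa1, kappa1 kappa2) K Q_B+.  For positive self-adjoint operators
   these form bounds turn into bounds on ||B|| and ||B^-1|| by the Cauchy-Schwarz
   inequality for Q_B.  Since [opinv] is the identity on non-invertible operators, one
   also needs that B_M invertible forces B^(0) invertible: surjectivity descends along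
   the updates, and coercivity gives injectivity. *)

From mathcomp Require Import all_boot all_order all_algebra.
From mathcomp Require Import all_classical all_reals all_analysis.
From mathcomp Require Import ring lra.
Import Order.TTheory GRing.Theory Num.Theory.
Import numFieldNormedType.Exports.
Local Open Scope ring_scope.
Set Implicit Arguments. Unset Strict Implicit.

Section RealInequalities.
Variable R : realFieldType.
Implicit Types a c d k p q r t u v m nx nz : R.

Lemma expr_max u v n : 0 <= u -> 0 <= v ->
  Num.max u v ^+ n = Num.max (u ^+ n) (v ^+ n).
Proof.
move=> u0 v0; have [uv|vu] := leP u v.
  by rewrite (max_idPr _) // lerXn2r.
by rewrite (max_idPl _) // lerXn2r // ltW.
Qed.

Lemma exprM_max1 c u v n : 0 <= u -> 0 <= v ->
  (c * Num.max 1 (Num.max u v)) ^+ n = c ^+ n * Num.max 1 (Num.max (u ^+ n) (v ^+ n)).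
Proof. by move=> u0 v0; rewrite exprMn !expr_max ?le_max ?u0 // expr1n. Qed.

Lemma sqr_le_of_quadratic_ge0 a c d : 0 <= d ->
  (forall t, 0 <= a + 2 * t * c + t ^+ 2 * d) -> c ^+ 2 <= a * d.
Proof.
move=> d0 hq; have [d_eq0|d_gt0] := eqVneq d 0; last first.
  have := hq (- c / d).
  rewrite (_ : _ + _ = (a * d - c ^+ 2) / d); last by field.
  by rewrite pmulr_lge0 ?invr_gt0 ?lt_def ?d_gt0 // subr_ge0.
rewrite d_eq0 mulr0; have [->|c_neq0] := eqVneq c 0; first by rewrite expr0n.
have := hq (- (a + 1) / (2 * c)).
rewrite d_eq0 mulr0 addr0 (_ : _ + _ = -1); last by field.
by rewrite ler0N1.
Qed.

Lemma le_of_sqr_le_mul p q : 0 <= p -> 0 <= q -> p ^+ 2 <= p * q -> p <= q.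
Proof.
move=> p0 q0; have [->|p_neq0] := eqVneq p 0; first by [].
by rewrite expr2 ler_pM2l // lt_def p_neq0.
Qed.

Lemma inv_le_div_bound k t (n : R) : 0 < k -> 0 <= n -> k^-1 <= t / n ->
  0 < n /\ n <= k * t.
Proof.
move=> k0 n0 h; have n_gt0 : 0 < n.
  rewrite lt_def n0 andbT; apply: contraTneq h => ->.
  by rewrite invr0 mulr0 -ltNge invr_gt0.
split=> //; move: h; rewrite ler_pdivlMr // => /(ler_wpM2l (ltW k0)).
by rewrite mulrA mulfV ?gt_eqF // mul1r.
Qed.

Lemma sqr_affine_le nx nz r u m : 0 <= nz -> 0 <= r -> 0 <= u ->
  r ^+ 2 <= m -> 1 <= m -> 0 <= nx -> nx <= (1 + r) * nz + u ->
  nx ^+ 2 <= 5 * m * nz ^+ 2 + 5 * u ^+ 2.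
Proof.
(* Young: (p + u)^2 <= 5/4 p^2 + 5 u^2, and (1 + r)^2 <= 2 (1 + r^2) <= 4 m. *)
move=> nz0 r0 u0 rm m1 nx0 hnx; set p := (1 + r) * nz.
have sq : nx ^+ 2 <= (p + u) ^+ 2.
  by rewrite lerXn2r // nnegrE addr_ge0 // mulr_ge0 // addr_ge0.
have young : (p + u) ^+ 2 <= 5 / 4 * p ^+ 2 + 5 * u ^+ 2.
  by rewrite -subr_ge0 (_ : _ - _ = (p / 2 - 2 * u) ^+ 2) ?sqr_ge0 //; field.
have : p ^+ 2 <= 4 * m * nz ^+ 2.
  by rewrite /p exprMn ler_wpM2r ?sqr_ge0 //; nra.
lra.
Qed.

End RealInequalities.

Section LinearMaps.
Variables (R : pzRingType) (U V : lmodType R).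
Implicit Types f g : U -> V.

Lemma linear_add f g : linear f -> linear g -> linear (fun w => f w + g w).
Proof. by move=> hf hg a x w; rewrite hf hg scalerDr addrACA. Qed.

Lemma linear_sub f g : linear f -> linear g -> linear (fun w => f w - g w).
Proof. by move=> hf hg a x w; rewrite hf hg scalerBr opprD addrACA. Qed.

Lemma linear_scale_vec (phi : U -> R) (v : V) :
  scalar phi -> linear (fun w => phi w *: v).
Proof. by move=> hphi a x w; rewrite hphi scalerDl scalerA. Qed.

End LinearMaps.

Section InnerProduct.
Variables (R : realType) (X : completeNormedModType R) (ip : X -> X -> R).
Hypothesis hip : is_inner_product ip.

Lemma ipC x y : ip x y = ip y x. Proof. by case: hip. Qed.

Lemma ipxx x : ip x x = `|x| ^+ 2. Proof. by case: hip => _ []. Qed.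

Lemma ip_scalarl z : scalar (ip^~ z).
Proof. by case: hip => _ [ipL _] a x y; exact: ipL. Qed.

Lemma ipDl x y z : ip (x + y) z = ip x z + ip y z.
Proof. exact: (GRing.semilinear_linear (ip_scalarl z)).2. Qed.

Lemma ipZl a x z : ip (a *: x) z = a * ip x z.
Proof. exact: scalable_linear (ip_scalarl z) a x. Qed.

Lemma ipBl x y z : ip (x - y) z = ip x z - ip y z.
Proof. exact: zmod_morphism_linear (ip_scalarl z) x y. Qed.

Lemma ipDr x y z : ip z (x + y) = ip z x + ip z y.
Proof. by rewrite ipC ipDl !(ipC z). Qed.

Lemma ipZr a x z : ip z (a *: x) = a * ip z x.
Proof. by rewrite ipC ipZl ipC. Qed.

Lemma ipBr x y z : ip z (x - y) = ip z x - ip z y.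
Proof. by rewrite ipC ipBl !(ipC z). Qed.

Lemma ip0r z : ip z 0 = 0.
Proof. by have := ipZr 0 0 z; rewrite scale0r mul0r. Qed.

Lemma form_CauchySchwarz (T : X -> X) : linear T -> self_adjoint ip T ->
  (forall x, 0 <= ip x (T x)) ->
  forall a b, ip a (T b) ^+ 2 <= ip a (T a) * ip b (T b).
Proof.
move=> linT saT psdT a b; apply: sqr_le_of_quadratic_ge0 => // t.
have := psdT (t *: b + a); rewrite linT !ipDl !ipDr !ipZl !ipZr -(saT b a) (ipC (T b) a).
lra.
Qed.

Lemma sqr_ip_le a b : ip a b ^+ 2 <= `|a| ^+ 2 * `|b| ^+ 2.
Proof.
rewrite -!ipxx; apply: (form_CauchySchwarz (T := id)) => // x.
by rewrite ipxx sqr_ge0.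
Qed.

Lemma normr_ip_le a b : `|ip a b| <= `|a| * `|b|.
Proof.
rewrite -(ler_pXn2r (isT : 0 < 2)%N) ?nnegrE ?mulr_ge0 //.
by rewrite real_normK ?num_real // exprMn sqr_ip_le.
Qed.

Lemma normr_split_le x y s a : 0 < ip y s ->
  `|x| <= (1 + `|y| * `|s| / ip y s) * `|x - a *: s| + `|ip y x| * `|s| / ip y s.
Proof.
move=> T0; set T := ip y s; set z := x - a *: s.
have nx : `|x| <= `|z| + `|a| * `|s|.
  by rewrite -normrZ (le_trans _ (ler_normD _ _)) // /z subrK.
have aT : `|a| * T <= `|ip y x| + `|y| * `|z|.
  have -> : `|a| * T = `|ip y x - ip y z|.
    by rewrite /z ipBr ipZr opprB addrC subrK normrM (gtr0_norm T0).
  by rewrite (le_trans (ler_normB _ _)) // lerD2l normr_ip_le.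
have : `|a| * `|s| <= (`|ip y x| + `|y| * `|z|) * `|s| / T.
  by rewrite ler_pdivlMr // mulrAC ler_wpM2r.
lra.
Qed.

Implicit Types (T C : X -> X) (K N c : R).

Definition form_lbound K T := forall x, `|x| ^+ 2 <= K * ip x (T x).
Definition form_ubound N T := forall x, ip x (T x) <= N * `|x| ^+ 2.
Definition invertible T := exists C, is_inverse T C.
Definition surjective T := forall b, exists x, T x = b.

Lemma self_adjoint_ipC T x w : self_adjoint ip T -> ip x (T w) = ip w (T x).
Proof. by move=> saT; rewrite -saT ipC. Qed.

Lemma form_lbound_ge0 K T : 0 < K -> form_lbound K T -> forall x, 0 <= ip x (T x).
Proof. by move=> K0 lbT x; rewrite -(pmulr_rge0 _ K0) (le_trans _ (lbT x)) ?sqr_ge0. Qed.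

Lemma form_lbound_gt0 K T x : 0 < K -> form_lbound K T -> 0 < `|x| ^+ 2 ->
  0 < ip x (T x).
Proof. by move=> K0 lbT x0; rewrite -(pmulr_rgt0 _ K0) (lt_le_trans x0). Qed.

Lemma form_lbound_le K K' T : K <= K' -> (forall x, 0 <= ip x (T x)) ->
  form_lbound K T -> form_lbound K' T.
Proof. by move=> KK' psdT lbT x; rewrite (le_trans (lbT x)) ?ler_wpM2r. Qed.

Lemma form_lbound_coercive c T : 0 < c -> (forall x, c * `|x| ^+ 2 <= ip x (T x)) ->
  form_lbound c^-1 T.
Proof. by move=> c0 hc x; rewrite ler_pdivlMl // hc. Qed.

Lemma opnorm_has_ubound T c : (forall x, `|T x| <= c * `|x|) ->
  has_ubound [set `|T x| | x in [set x : X | `|x| <= 1]].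
Proof.
move=> bndT; exists `|c| => _ [x /= x1 <-]; apply: le_trans (bndT x) _.
by apply: le_trans (ler_wpM2r (normr_ge0 x) (ler_norm c)) _; rewrite ler_piMr.
Qed.

Lemma opnorm_ge0 T c : (forall x, `|T x| <= c * `|x|) -> 0 <= opnorm T.
Proof.
move=> bndT; apply: le_trans (normr_ge0 (T 0)) _.
by apply: (ub_le_sup (opnorm_has_ubound bndT)); exists 0; rewrite //= normr0.
Qed.

Lemma opnorm_le T c : 0 <= c -> (forall x, `|T x| <= c * `|x|) -> opnorm T <= c.
Proof.
move=> c0 bndT; apply: ge_sup; first by exists `|T 0|, 0; rewrite //= normr0.
by move=> _ [x /= x1 <-]; rewrite (le_trans (bndT x)) // ler_piMr.
Qed.

Lemma opnorm_bound T c : linear T -> (forall x, `|T x| <= c * `|x|) ->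
  forall x, `|T x| <= opnorm T * `|x|.
Proof.
move=> linT bndT x; have [->|x_neq0] := eqVneq x 0.
  by have := bndT 0; rewrite !normr0 !mulr0.
have x_gt0 : 0 < `|x| by rewrite normr_gt0.
have -> : `|T x| = `|T (`|x|^-1 *: x)| * `|x|.
  by rewrite (scalable_linear linT) normrZ ger0_norm ?invr_ge0 // mulrAC mulVf ?mul1r ?gt_eqF.
rewrite ler_wpM2r //.
by apply: (ub_le_sup (opnorm_has_ubound bndT)); exists (`|x|^-1 *: x); rewrite //= normfZV.
Qed.

Lemma form_ubound_opnorm T c : linear T -> (forall x, `|T x| <= c * `|x|) ->
  form_ubound (opnorm T) T.
Proof.
move=> linT bndT x; rewrite (le_trans (ler_norm _)) // (le_trans (normr_ip_le _ _)) //.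
by rewrite mulrC expr2 mulrA ler_wpM2r // (opnorm_bound linT bndT).
Qed.

Lemma norm_le_form_ubound N T : linear T -> self_adjoint ip T ->
  (forall x, 0 <= ip x (T x)) -> 0 <= N -> form_ubound N T ->
  forall x, `|T x| <= N * `|x|.
Proof.
move=> linT saT psdT N0 ubT x.
have := form_CauchySchwarz linT saT psdT x (T x).
rewrite -saT ipxx => cs.
have key : `|T x| ^+ 2 ^+ 2 <= `|T x| ^+ 2 * (N * `|x|) ^+ 2.
  apply: le_trans cs (le_trans (ler_pM (psdT _) (psdT _) (ubT x) (ubT (T x))) _).
  lra.
have := le_of_sqr_le_mul (sqr_ge0 _) (sqr_ge0 _) key.
by rewrite ler_pXn2r ?nnegrE ?mulr_ge0.
Qed.

Lemma opnorm_le_form_ubound N T : linear T -> self_adjoint ip T ->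
  (forall x, 0 <= ip x (T x)) -> 0 <= N -> form_ubound N T -> opnorm T <= N.
Proof. by move=> linT saT psdT N0 ubT; exact/opnorm_le/norm_le_form_ubound. Qed.

Lemma Lplus_of_form_bounds K N T : linear T -> self_adjoint ip T ->
  0 < K -> form_lbound K T -> 0 <= N -> form_ubound N T -> Lplus ip T.
Proof.
move=> linT saT K0 lbT N0 ubT; split.
  by split=> //; exists N; apply: norm_le_form_ubound (form_lbound_ge0 K0 lbT) N0 ubT.
split=> //; exists K^-1; split; first by rewrite invr_gt0.
by move=> x; rewrite ler_pdivrMl // lbT.
Qed.

Lemma opinv_inverse T : invertible T -> is_inverse T (opinv T).
Proof. by rewrite /opinv; case: pselect => // h _; exact: (proj2_sig (cid h)). Qed.

Lemma opinv_id T : ~ invertible T -> opinv T = id.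
Proof. by rewrite /opinv; case: pselect. Qed.

Lemma inverse_linear T C : linear T -> is_inverse T C -> linear C.
Proof. by move=> linT [TC CT] a x y; rewrite -{1}(TC x) -{1}(TC y) -linT CT. Qed.

Lemma inverse_bound K T C : 0 <= K -> form_lbound K T -> is_inverse T C ->
  forall u, `|C u| <= K * `|u|.
Proof.
move=> K0 lbT [TC _] u; apply: le_of_sqr_le_mul; rewrite ?mulr_ge0 //.
by rewrite (le_trans (lbT _)) // TC mulrCA ler_wpM2l // (le_trans (ler_norm _)) ?normr_ip_le.
Qed.

Lemma opnorm_opinv_le1 T : ~ invertible T -> opnorm (opinv T) <= 1.
Proof. by move=> ninvT; rewrite opinv_id //; apply: opnorm_le => // x; rewrite mul1r. Qed.

Lemma opnorm_opinv_le K T : 1 <= K -> form_lbound K T -> opnorm (opinv T) <= K.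
Proof.
move=> K1 lbT; have K0 := le_trans ler01 K1.
have [invT|ninvT] := pselect (invertible T).
  exact/opnorm_le/(inverse_bound K0 lbT)/opinv_inverse.
exact: le_trans (opnorm_opinv_le1 ninvT) K1.
Qed.

Lemma form_lbound_opinv K T : linear T -> self_adjoint ip T -> 0 < K ->
  form_lbound K T -> invertible T -> form_lbound (opnorm (opinv T)) T.
Proof.
move=> linT saT K0 lbT /opinv_inverse invT x; set L := opnorm (opinv T).
have psdT := form_lbound_ge0 K0 lbT.
have bndC := inverse_bound (ltW K0) lbT invT.
have hCx : ip (opinv T x) x <= L * `|x| ^+ 2.
  rewrite (le_trans (ler_norm _)) // (le_trans (normr_ip_le _ _)) // expr2 mulrA.
  by rewrite ler_wpM2r // (opnorm_bound (inverse_linear linT invT) bndC).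
apply: le_of_sqr_le_mul; rewrite ?mulr_ge0 ?(opnorm_ge0 bndC) //.
have := form_CauchySchwarz linT saT psdT x (opinv T x); rewrite !invT.1 ipxx.
by move=> /le_trans; apply; apply: le_trans (ler_wpM2l (psdT x) hCx) _; lra.
Qed.

Lemma invertible_of_surjective K T : linear T -> 0 < K -> form_lbound K T ->
  surjective T -> invertible T.
Proof.
move=> linT K0 lbT surjT.
have injT x x' : T x = T x' -> x = x'.
  move=> eqT; apply/eqP; rewrite -subr_eq0 -normr_eq0 -sqrf_eq0 eq_le sqr_ge0 andbT.
  by rewrite (le_trans (lbT _)) // (zmod_morphism_linear linT) eqT subrr ip0r // mulr0.
exists (fun b => proj1_sig (cid (surjT b))); split=> [b|x].
  exact: proj2_sig (cid (surjT b)).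
by apply: injT; exact: proj2_sig (cid (surjT (T x))).
Qed.

Section Update.
Variables (B : X -> X) (s y : X).
Hypotheses (linB : linear B) (saB : self_adjoint ip B).
Local Notation Bp := (bfgs_update ip B s y).

Lemma bfgs_update_linear : linear Bp.
Proof.
apply: linear_sub; first apply: linear_add => //.
  by apply: linear_scale_vec => a x w; rewrite ipDr ipZr mulrDl mulrA.
by apply: linear_scale_vec => a x w; rewrite linB ipDr ipZr mulrDl mulrA.
Qed.

Lemma bfgs_update_self_adjoint : self_adjoint ip Bp.
Proof.
move=> x w; rewrite /bfgs_update !ipBl !ipDl !ipZl !ipBr !ipDr !ipZr !saB.
by rewrite (ipC x y) (self_adjoint_ipC x s saB); ring.
Qed.

Lemma bfgs_update_form x : ip x (Bp x) =
  ip x (B x) + ip y x ^+ 2 / ip y s - ip s (B x) ^+ 2 / ip s (B s).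
Proof.
by rewrite /bfgs_update ipBr ipDr !ipZr (ipC x y) (self_adjoint_ipC x s saB); ring.
Qed.

Lemma bfgs_update_secant : ip y s != 0 -> ip s (B s) != 0 -> Bp s = y.
Proof.
by move=> T0 D0; rewrite /bfgs_update !divff // !scale1r addrAC subrr add0r.
Qed.

Lemma form_sub_proj x : ip s (B s) != 0 ->
  let z := x - (ip s (B x) / ip s (B s)) *: s in
  ip z (B z) = ip x (B x) - ip s (B x) ^+ 2 / ip s (B s).
Proof.
move=> D0 z; rewrite /z (zmod_morphism_linear linB) (scalable_linear linB).
by rewrite !ipBl !ipBr !ipZl !ipZr (self_adjoint_ipC x s saB); field.
Qed.

Lemma bfgs_update_ubound N k2 : 0 < ip y s -> 0 < ip s (B s) ->
  `|y| ^+ 2 <= k2 * ip y s -> form_ubound N B -> form_ubound (N + k2) Bp.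
Proof.
move=> T0 D0 hy ubB x; rewrite bfgs_update_form.
have hY : ip y x ^+ 2 / ip y s <= k2 * `|x| ^+ 2.
  rewrite ler_pdivrMr // (le_trans (sqr_ip_le _ _)) //.
  by rewrite [leRHS]mulrAC ler_wpM2r ?sqr_ge0.
have : 0 <= ip s (B x) ^+ 2 / ip s (B s) by rewrite divr_ge0 ?sqr_ge0 // ltW.
have := ubB x; lra.
Qed.

Lemma bfgs_update_lbound K k1 k2 : 1 <= K -> form_lbound K B ->
  0 < ip y s -> 0 < ip s (B s) ->
  `|s| ^+ 2 <= k1 * ip y s -> `|y| ^+ 2 <= k2 * ip y s ->
  form_lbound (5 * Num.max 1 (Num.max k1 (k1 * k2)) * K) Bp.
Proof.
move=> K1 lbB T0 D0 hs hy x; set T := ip y s in T0 hs hy *; set Y := ip y x.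
set m := Num.max 1 (Num.max k1 (k1 * k2)).
set z := x - (ip s (B x) / ip s (B s)) *: s.
have QBp : ip x (Bp x) = ip z (B z) + Y ^+ 2 / T.
  have := form_sub_proj x (lt0r_neq0 D0); rewrite /= -/z bfgs_update_form -/Y -/T.
  by move=> ->; ring.
have [sigma [sigma_ge0 sigmaT x_le]] : exists sigma, [/\ 0 <= sigma,
    sigma ^+ 2 * T <= k1 & `|x| <= (1 + `|y| * sigma) * `|z| + `|Y| * sigma].
  exists (`|s| / T); split; first by rewrite divr_ge0 // ltW.
    by rewrite (_ : _ * T = `|s| ^+ 2 / T) ?ler_pdivrMr //; field; rewrite lt0r_neq0.
  by rewrite !mulrA; exact: normr_split_le.
have m1 : 1 <= m by rewrite le_max lexx.
have m0 : 0 <= m := le_trans ler01 m1.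
have k1m : k1 <= m by rewrite !le_max lexx orbT.
have k12m : k1 * k2 <= m by rewrite !le_max lexx !orbT.
have k2_ge0 : 0 <= k2 by rewrite -(pmulr_lge0 _ T0) (le_trans (sqr_ge0 _) hy).
have r2 : (`|y| * sigma) ^+ 2 <= m.
  have := ler_wpM2r (sqr_ge0 sigma) hy; have := ler_wpM2l k2_ge0 sigmaT.
  rewrite exprMn; lra.
have Y2T : 0 <= Y ^+ 2 / T by rewrite divr_ge0 ?sqr_ge0 ?ltW.
have u2 : (`|Y| * sigma) ^+ 2 <= m * (Y ^+ 2 / T).
  have -> : (`|Y| * sigma) ^+ 2 = Y ^+ 2 / T * (sigma ^+ 2 * T).
    by rewrite exprMn real_normK ?num_real //; field; rewrite lt0r_neq0.
  by rewrite (le_trans (ler_wpM2l Y2T sigmaT)) // mulrC ler_wpM2r.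
have := sqr_affine_le (normr_ge0 z) (mulr_ge0 (normr_ge0 y) sigma_ge0)
  (mulr_ge0 (normr_ge0 Y) sigma_ge0) r2 m1 (normr_ge0 x) x_le.
have := ler_wpM2l (mulr_ge0 (ler0n _ 5) m0) (lbB z).
have : 0 <= (K - 1) * (5 * m * (Y ^+ 2 / T)).
  by rewrite mulr_ge0 ?subr_ge0 // mulr_ge0 // mulr_ge0.
rewrite QBp; lra.
Qed.

Lemma bfgs_update_surjective : 0 < ip y s -> 0 < ip s (B s) ->
  surjective Bp -> surjective B.
Proof.
(* Remove from [b] its [B s]-component; a preimage [w] of the rest satisfies [<y, w> = 0]
   by the secant equation, so [B w] is that rest plus a multiple of [B s]. *)
move=> T0 D0 surjBp b; set D := ip s (B s).
set c := ip s b / D; set z := b - c *: B s.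
have sz : ip s z = 0 by rewrite /z ipBr ipZr /c mulfVK ?subrr // gt_eqF.
have [w Bpw] := surjBp z.
have yw : ip y w = 0.
  by rewrite -(bfgs_update_secant (lt0r_neq0 T0) (lt0r_neq0 D0)) bfgs_update_self_adjoint Bpw.
move: Bpw; rewrite /bfgs_update yw mul0r scale0r addr0 -/D => Bpw.
set e := ip s (B w) / D.
exists ((c - e) *: s + w); rewrite linB.
have -> : B w = z + e *: B s by rewrite -Bpw subrK.
by rewrite addrCA -scalerDl subrK /z subrK.
Qed.

End Update.

Section Sequence.
Variables (B0 : X -> X) (s y : nat -> X) (M : nat) (k1 k2 : R).
Hypotheses (k1_gt0 : 0 < k1) (k2_gt0 : 0 < k2).
Hypothesis pairs : forall j : nat, (1 <= j <= M)%N ->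
  ip (y j) (s j) / `|s j| ^+ 2 >= k1^-1 /\ ip (y j) (s j) / `|y j| ^+ 2 >= k2^-1.
Hypotheses (linB0 : linear B0) (saB0 : self_adjoint ip B0).
Variables (c N0 : R).
Hypotheses (c_gt0 : 0 < c) (lbB0 : form_lbound c B0) (ubB0 : form_ubound N0 B0).
Local Notation Bj := (bfgs_seq ip B0 s y).
Local Notation m := (Num.max 1 (Num.max k1 (k1 * k2))).

Lemma pair_bounds j : (j < M)%N ->
  [/\ 0 < ip (y j.+1) (s j.+1), 0 < `|s j.+1| ^+ 2,
      `|s j.+1| ^+ 2 <= k1 * ip (y j.+1) (s j.+1) &
      `|y j.+1| ^+ 2 <= k2 * ip (y j.+1) (s j.+1)].
Proof.
move=> jM; have [hs hy] := @pairs j.+1 jM.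
have [s_gt0 s_le] := inv_le_div_bound k1_gt0 (sqr_ge0 _) hs.
have [_ y_le] := inv_le_div_bound k2_gt0 (sqr_ge0 _) hy.
by split=> //; rewrite -(pmulr_rgt0 _ k1_gt0) (lt_le_trans s_gt0).
Qed.

Lemma bfgs_lbound_factor_ge1 K j : 1 <= (5 * m) ^+ j * Num.max 1 K.
Proof.
have m1 : 1 <= m by rewrite le_max lexx.
by rewrite mulr_ege1 ?le_max ?lexx // exprn_ege1 //; lra.
Qed.

Lemma bfgs_seq_bounds K j : form_lbound K B0 -> (j <= M)%N ->
  [/\ linear (Bj j), self_adjoint ip (Bj j),
      form_lbound ((5 * m) ^+ j * Num.max 1 K) (Bj j) &
      form_ubound (N0 + j%:R * k2) (Bj j)].
Proof.
move=> lbK; have lbK1 : form_lbound (Num.max 1 K) B0.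
  by apply: form_lbound_le (form_lbound_ge0 c_gt0 lbB0) lbK; rewrite le_max lexx orbT.
elim: j => [_|j IH jM]; first by rewrite expr0 mul1r mul0r addr0.
have [linBj saBj lbBj ubBj] := IH (ltnW jM).
have [T0 s0 hs hy] := pair_bounds jM.
have K_ge1 := bfgs_lbound_factor_ge1 K j.
have D0 := form_lbound_gt0 (lt_le_trans ltr01 K_ge1) lbBj s0.
split; [exact: bfgs_update_linear | exact: bfgs_update_self_adjoint | |].
  by rewrite exprS -mulrA; exact: bfgs_update_lbound K_ge1 lbBj T0 D0 hs hy.
by rewrite -natr1 mulrDl mul1r addrA; exact: bfgs_update_ubound T0 D0 hy ubBj.
Qed.

Lemma bfgs_seq_surjective j : (j <= M)%N -> surjective (Bj j) -> surjective B0.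
Proof.
elim: j => [//|j IH jM surjBj]; apply: IH (ltnW jM) _.
have [linBj saBj lbBj _] := bfgs_seq_bounds lbB0 (ltnW jM).
have [T0 s0 _ _] := pair_bounds jM.
have D0 := form_lbound_gt0 (lt_le_trans ltr01 (bfgs_lbound_factor_ge1 c j)) lbBj s0.
exact: bfgs_update_surjective linBj saBj T0 D0 surjBj.
Qed.

Lemma bfgs_seq_invertible j : (j <= M)%N -> invertible (Bj j) -> invertible B0.
Proof.
move=> jM [C [BjC _]]; apply: invertible_of_surjective linB0 c_gt0 lbB0 _.
by apply: bfgs_seq_surjective jM _ => b; exists (C b).
Qed.

End Sequence.

End InnerProduct.

Theorem lemma4p1 (R : realType) (X : completeNormedModType R)
  (ip : X -> X -> R) (M : nat) (kappa1 kappa2 : R)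
  (s y : nat -> X) (B0 : X -> X) :
  is_inner_product ip ->
  0 < kappa1 -> 0 < kappa2 ->
  (forall j : nat, (1 <= j <= M)%N ->
     ip (y j) (s j) / `|s j| ^+ 2 >= kappa1^-1 /\
     ip (y j) (s j) / `|y j| ^+ 2 >= kappa2^-1) ->
  Lplus ip B0 ->
  let B := bfgs_seq ip B0 s y M in
  Lplus ip B /\
  opnorm B <= opnorm B0 + M%:R * kappa2 /\
  opnorm (opinv B) <=
    5 ^+ M * Num.max 1 (opnorm (opinv B0)) *
    Num.max 1 (Num.max (kappa1 ^+ M) ((kappa1 * kappa2) ^+ M)).
Proof.
move=> hip k1_gt0 k2_gt0 pairs [[linB0 [b bndB0]] [saB0 [c [c_gt0 hc]]]] /=.
have lbB0 := form_lbound_coercive c_gt0 hc; rewrite -invr_gt0 in c_gt0.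
have ubB0 := form_ubound_opnorm hip linB0 bndB0.
have N_ge0 : 0 <= opnorm B0 + M%:R * kappa2.
  by rewrite addr_ge0 ?(opnorm_ge0 bndB0) // mulr_ge0 // ltW.
have bounds L (lbL : form_lbound ip L B0) := bfgs_seq_bounds hip k1_gt0 k2_gt0 pairs
  linB0 saB0 c_gt0 lbB0 ubB0 lbL (leqnn M).
have factor_ge1 := bfgs_lbound_factor_ge1 kappa1 kappa2.
have [linB saB lbB ubB] := bounds _ lbB0.
have K_gt0 := lt_le_trans ltr01 (factor_ge1 c^-1 M).
split; first exact (Lplus_of_form_bounds hip linB saB K_gt0 lbB N_ge0 ubB).
split; first exact (opnorm_le_form_ubound hip linB saB (form_lbound_ge0 K_gt0 lbB) N_ge0 ubB).
have k1_ge0 := ltW k1_gt0; have k12_ge0 := mulr_ge0 k1_ge0 (ltW k2_gt0).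
rewrite mulrAC -(exprM_max1 5 M k1_ge0 k12_ge0).
have [invB0|ninvB0] := pselect (invertible B0).
  have [_ _ lbB' _] := bounds _ (form_lbound_opinv hip linB0 saB0 c_gt0 lbB0 invB0).
  exact: opnorm_opinv_le (factor_ge1 _ _) lbB'.
apply: le_trans (opnorm_opinv_le1 _) (factor_ge1 _ _) => invB; apply: ninvB0.
exact (bfgs_seq_invertible hip k1_gt0 k2_gt0 pairs linB0 saB0 c_gt0 lbB0 ubB0 (leqnn M) invB).
Qed.
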